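(* Let $(X,\sigma_X)$ be a one-sided full shift, $(Y,\sigma_Y)$ a subshift, $\pi:X\to Y$ a one-block factor map, and $f\in C(X)$ depending only on the first coordinate. With $\bar g_n(y)=\sup_{E_n(y)}\sum_{x\in E_n(y)}e^{f(x)+\cdots+f(\sigma_X^{n-1}x)}$, one has $\bar g_n(y)=\bar g_1(y)\bar g_{n-1}(\sigma_Yy)$ for all $n\ge2$ and $y\in Y$. Consequently $\lim_{n\to\infty}\frac1n\int\log\bar g_n\,dm=\int\log\bar g_1\,dm$ for all $m\in M(Y,\sigma_Y)$, and the image under $\pi$ of the unique invariant Gibbs measure for $f$ is the unique invariant Gibbs measure for the locally constant function $\log\bar g_1$ on $Y$.
   Context: Full shift: $\{1,\dots,k\}^{\mathbb N}$ with left shift; subshift: closed shift-invariant subset of some $\{1,\dots,l\}^{\mathbb N}$. One-block factor map: continuous surjection commuting with shifts, $\pi(x)_i$ depending only on $x_i$. $E_n(y)$: any set with exactly one point from each cylinder $[x_1\cdots x_n]$ of $X$ with $\pi([x_1\cdots x_n])\subseteq[y_1\cdots y_n]$; the sup is over all such choices. Gibbs measure for $\phi\in C(Z)$: invariant $\mu$ with $C_0^{-1}<\mu([z_1\cdots z_n])/e^{-nP(\phi)+\sum_{i<n}\phi(\sigma^iz)}<C_0$ for all $z,n$. *)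

From Stdlib Require Import Reals List Arith ClassicalEpsilon.
Import ListNotations.
Open Scope R_scope.

(* One-sided sequences over alphabet {0,...,a-1} (the paper's {1,...,a}). *)
Definition sq := nat -> nat.
Definition shift (x : sq) : sq := fun i => x (S i).
Definition in_alph (a : nat) (x : sq) : Prop := forall i, (x i < a)%nat.
Definition prefix (x : sq) (n : nat) : list nat := map x (seq 0 n).
Definition cyl (w : list nat) (x : sq) : Prop := prefix x (length w) = w.

Definition subshift (l : nat) (Y : sq -> Prop) : Prop :=
  (forall y, Y y -> in_alph l y) /\
  (forall y, Y y -> Y (shift y)) /\
  (forall y, in_alph l y ->
     (forall n, exists z, Y z /\ prefix z n = prefix y n) -> Y y).

Definition one_block_factor (k l : nat) (Y : sq -> Prop) (pi : sq -> sq) : Prop :=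
  (forall x, in_alph k x -> Y (pi x)) /\
  (forall y, Y y -> exists x, in_alph k x /\ pi x = y) /\
  (forall x n, in_alph k x -> exists N, forall x', in_alph k x' ->
      prefix x' N = prefix x N -> prefix (pi x') n = prefix (pi x) n) /\
  (forall x i, in_alph k x -> pi (shift x) i = shift (pi x) i) /\
  (forall x x' i, in_alph k x -> in_alph k x' -> x i = x' i -> pi x i = pi x' i).

Fixpoint words (a n : nat) : list (list nat) :=
  match n with
  | O => [[]]
  | S m => flat_map (fun b => map (cons b) (words a m)) (seq 0 a)
  end.

Definition sumR (l : list R) : R := fold_right Rplus 0 l.

Fixpoint birk (f : sq -> R) (n : nat) (x : sq) : R :=
  match n with
  | O => 0
  | S m => f x + birk f m (shift x)
  end.

Definition lub_of (E : R -> Prop) : R := epsilon (inhabits 0) (fun s => is_lub E s).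

Definition cyl_maps_into (k : nat) (pi : sq -> sq) (w v : list nat) : Prop :=
  forall x, in_alph k x -> cyl w x -> cyl v (pi x).

(* the set of values  sum_{x in E_n(y)} e^{S_n f(x)}  over all choices of E_n(y) *)
Definition Esums (k : nat) (pi : sq -> sq) (f : sq -> R) (n : nat) (y : sq) : R -> Prop :=
  fun s => exists (c : list nat -> sq) (L : list (list nat)),
    NoDup L /\
    (forall w, In w L <-> (length w = n /\ Forall (fun b => (b < k)%nat) w /\
                          cyl_maps_into k pi w (prefix y n))) /\
    (forall w, In w L -> in_alph k (c w) /\ cyl w (c w)) /\
    s = sumR (map (fun w => exp (birk f n (c w))) L).

Definition gbar (k : nat) (pi : sq -> sq) (f : sq -> R) (n : nat) (y : sq) : R :=
  lub_of (Esums k pi f n y).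

(* shift-invariant Borel probability measure supported on Z, given by its
   values on cylinders (Kolmogorov/Caratheodory extension). *)
Definition inv_meas (a : nat) (Z : sq -> Prop) (m : list nat -> R) : Prop :=
  (forall w, 0 <= m w) /\
  m [] = 1 /\
  (forall w, m w = sumR (map (fun b => m (w ++ [b])) (seq 0 a))) /\
  (forall w, m w = sumR (map (fun b => m (b :: w)) (seq 0 a))) /\
  (forall w, ~ (exists z, Z z /\ cyl w z) -> m w = 0).

Definition riemann (a : nat) (Z : sq -> Prop) (m : list nat -> R) (F : sq -> R)
  (N : nat) : R :=
  sumR (map (fun w => m w * F (epsilon (inhabits (fun _ => O))
                                      (fun z => Z z /\ cyl w z)))
            (words a N)).
Definition is_integral (a : nat) (Z : sq -> Prop) (m : list nat -> R) (F : sq -> R)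
  (I : R) : Prop := Un_cv (riemann a Z m F) I.

Definition is_pressure (a : nat) (Z : sq -> Prop) (phi : sq -> R) (P : R) : Prop :=
  Un_cv (fun n =>
    ln (sumR (map (fun w =>
          if excluded_middle_informative (exists z, Z z /\ cyl w z)
          then exp (lub_of (fun t => exists z, Z z /\ cyl w z /\ t = birk phi (S n) z))
          else 0) (words a (S n)))) / INR (S n)) P.

Definition gibbs (a : nat) (Z : sq -> Prop) (phi : sq -> R) (mu : list nat -> R) : Prop :=
  inv_meas a Z mu /\
  exists P C0, is_pressure a Z phi P /\ 0 < C0 /\
    forall z n, Z z -> (1 <= n)%nat ->
      / C0 < mu (prefix z n) / exp (- INR n * P + birk phi n z) < C0.

(* nu = pi_* mu  (pi^{-1}[v] is a finite union of long cylinders) *)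
Definition pushforward (k : nat) (pi : sq -> sq) (mu nu : list nat -> R) : Prop :=
  forall v, exists N0, forall N, (N0 <= N)%nat ->
    nu v = sumR (map (fun w =>
             if excluded_middle_informative (cyl_maps_into k pi w v) then mu w else 0)
           (words k N)).

From Stdlib Require Import Reals List Arith ClassicalEpsilon.
Import ListNotations.
Open Scope R_scope.
From Stdlib Require Import Lra Lia Permutation Classical FunctionalExtensionality.

(* Because pi is a one-block map, a cylinder [x_1...x_n] of X is mapped into
   [y_1...y_n] exactly when pi maps the word x_1...x_n letterwise onto
   y_1...y_n.  As f only sees the first letter, the supremum defining
   gbar_n(y) is attained by every choice of E_n(y) and equals the product of
   G(y_1), ..., G(y_n), where G(s) sums e^f(b) over the letters b with image s.
   This gives the cocycle identity, and integrating against an invariant m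
   gives int log gbar_n dm = n int log gbar_1 dm exactly.

   On a full shift over some alphabet, a potential depending on the first
   letter only has the Bernoulli measure with weights e^g(b) / sum e^g as a
   Gibbs measure, with pressure log (sum e^g).  Any other Gibbs measure is
   dominated by this Bernoulli measure, hence equal to it.  Finally Y = pi(X)
   is the full shift over the image alphabet, log gbar_1 is the potential
   log G(y_1) on it, and the image of the Bernoulli measure for f is the
   Bernoulli measure with weights G(s) / sum G, i.e. the Gibbs measure of
   log gbar_1. *)

Lemma sumR_app l1 l2 : sumR (l1 ++ l2) = sumR l1 + sumR l2.
Proof. induction l1 as [|x l1 IH]; simpl; [lra | rewrite IH; lra]. Qed.

Lemma sumR_perm l1 l2 : Permutation l1 l2 -> sumR l1 = sumR l2.
Proof. induction 1; simpl; lra. Qed.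

Section SumMap.
Context {A : Type}.
Implicit Types (F G : A -> R) (L : list A).

Lemma sumR_map_ext F G L :
  (forall x, In x L -> F x = G x) -> sumR (map F L) = sumR (map G L).
Proof. induction L as [|x L IH]; simpl; intros H; auto. rewrite H, IH; auto. Qed.

Lemma sumR_map_add F G L :
  sumR (map (fun x => F x + G x) L) = sumR (map F L) + sumR (map G L).
Proof. induction L as [|x L IH]; simpl; [lra | rewrite IH; lra]. Qed.

Lemma sumR_map_sub F G L :
  sumR (map (fun x => F x - G x) L) = sumR (map F L) - sumR (map G L).
Proof. induction L as [|x L IH]; simpl; [lra | rewrite IH; lra]. Qed.

Lemma sumR_map_scal c F L :
  sumR (map (fun x => c * F x) L) = c * sumR (map F L).
Proof. induction L as [|x L IH]; simpl; [lra | rewrite IH; lra]. Qed.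

Lemma sumR_map_zero F L : (forall x, In x L -> F x = 0) -> sumR (map F L) = 0.
Proof. induction L as [|x L IH]; simpl; intros H; auto. rewrite H, IH; auto; lra. Qed.

Lemma sumR_map_le F G L :
  (forall x, In x L -> F x <= G x) -> sumR (map F L) <= sumR (map G L).
Proof.
  induction L as [|x L IH]; simpl; intros H; [lra|].
  pose proof (H x (or_introl eq_refl)). pose proof (IH (fun y h => H y (or_intror h))). lra.
Qed.

Lemma sumR_map_nonneg F L : (forall x, In x L -> 0 <= F x) -> 0 <= sumR (map F L).
Proof.
  induction L as [|x L IH]; simpl; intros H; [lra|].
  pose proof (H x (or_introl eq_refl)). pose proof (IH (fun y h => H y (or_intror h))). lra.
Qed.

Lemma sumR_map_ge_term F L y :
  (forall x, In x L -> 0 <= F x) -> In y L -> F y <= sumR (map F L).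
Proof.
  induction L as [|x L IH]; simpl; intros H Hy; [contradiction|].
  pose proof (sumR_map_nonneg F L (fun z h => H z (or_intror h))).
  pose proof (H x (or_introl eq_refl)).
  destruct Hy as [<-|Hy]; [lra|]. pose proof (IH (fun z h => H z (or_intror h)) Hy). lra.
Qed.

Lemma sumR_map_filter (p : A -> bool) F L :
  sumR (map F (filter p L)) = sumR (map (fun x => if p x then F x else 0) L).
Proof. induction L as [|x L IH]; simpl; auto. destruct (p x); simpl; rewrite IH; lra. Qed.

Lemma sumR_map_flat_map {B : Type} (F : B -> R) (G : A -> list B) L :
  sumR (map F (flat_map G L)) = sumR (map (fun x => sumR (map F (G x))) L).
Proof. induction L as [|x L IH]; simpl; auto. now rewrite map_app, sumR_app, IH. Qed.

End SumMap.

Lemma sumR_map_swap {A B : Type} (F : A -> B -> R) (L : list A) (L' : list B) :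
  sumR (map (fun i => sumR (map (fun j => F i j) L')) L) =
  sumR (map (fun j => sumR (map (fun i => F i j) L)) L').
Proof.
  induction L as [|x L IH]; simpl.
  - now rewrite sumR_map_zero.
  - now rewrite IH, <- sumR_map_add.
Qed.

Lemma sumR_map_indicator (L : list nat) x c : NoDup L -> In x L ->
  sumR (map (fun s => if (x =? s)%nat then c else 0) L) = c.
Proof.
  induction L as [|s L IH]; simpl; intros Hn Hi; [contradiction|].
  inversion Hn as [|? ? HsL HL]; subst.
  destruct (Nat.eqb_spec x s) as [->|Hxs].
  - rewrite sumR_map_zero; [lra|]. intros t Ht.
    destruct (Nat.eqb_spec s t); [subst; contradiction | auto].
  - destruct Hi as [->|Hi]; [contradiction|]. rewrite IH; auto; lra.
Qed.

Lemma Un_cv_eventually_const (u : nat -> R) c n0 :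
  (forall n, (n0 <= n)%nat -> u n = c) -> Un_cv u c.
Proof.
  intros H eps Heps. exists n0. intros n Hn. unfold R_dist.
  rewrite H by lia. rewrite Rminus_diag, Rabs_R0. auto.
Qed.

Lemma lub_of_unique_value E s : (exists t, E t) -> (forall t, E t -> t = s) -> lub_of E = s.
Proof.
  intros [t Ht] H.
  assert (Hs : is_lub E s).
  { split.
    - intros x Hx. rewrite (H x Hx). lra.
    - intros b Hb. rewrite <- (H t Ht). auto. }
  unfold lub_of. destruct (epsilon_spec (inhabits 0) (fun s => is_lub E s) (ex_intro _ s Hs))
    as [Hub Hleast].
  destruct Hs as [Hub' Hleast']. apply Rle_antisym; auto.
Qed.

Lemma In_words a n w : In w (words a n) <-> length w = n /\ Forall (fun b => (b < a)%nat) w.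
Proof.
  revert w; induction n as [|n IH]; intros w; simpl.
  - split; [intros [<-|[]]; auto | intros [H _]; destruct w; [auto | discriminate]].
  - rewrite in_flat_map. split.
    + intros [b [Hb Hw]]. apply in_map_iff in Hw. destruct Hw as [w' [<- Hw']].
      apply IH in Hw'. apply in_seq in Hb. destruct Hw'. simpl. split; [lia | constructor; auto; lia].
    + intros [Hl Hf]. destruct w as [|b w']; simpl in Hl; [discriminate|].
      inversion Hf; subst. exists b. split; [apply in_seq; lia|].
      apply in_map, IH. auto.
Qed.

Lemma NoDup_words a n : NoDup (words a n).
Proof.
  induction n as [|n IH]; simpl; [repeat constructor; auto|].
  generalize (seq_NoDup a 0). generalize (seq 0 a). intros L HL.
  induction L as [|b L IHL]; simpl; [constructor|]. inversion HL; subst.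
  apply NoDup_app; auto.
  - apply FinFun.Injective_map_NoDup; auto. intros x y E. now inversion E.
  - intros w Hw Hw'. apply in_map_iff in Hw. destruct Hw as [w1 [<- _]].
    apply in_flat_map in Hw'. destruct Hw' as [b' [Hb' Hw']]. apply in_map_iff in Hw'.
    destruct Hw' as [w2 [E _]]. inversion E; subst. contradiction.
Qed.

Lemma sum_words_S a n (F : list nat -> R) :
  sumR (map F (words a (S n))) =
  sumR (map (fun b => sumR (map (fun w => F (b :: w)) (words a n))) (seq 0 a)).
Proof. simpl. rewrite sumR_map_flat_map. apply sumR_map_ext; intros. now rewrite map_map. Qed.

Lemma sum_words_add a n m (F : list nat -> R) :
  sumR (map F (words a (n + m))) =
  sumR (map (fun x => sumR (map (fun y => F (x ++ y)) (words a m))) (words a n)).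
Proof.
  revert F; induction n as [|n IH]; intros F.
  - simpl. now rewrite Rplus_0_r.
  - simpl (S n + m)%nat. rewrite !sum_words_S. apply sumR_map_ext; intros b _. now rewrite IH.
Qed.

Lemma sum_words_1 a (F : list nat -> R) :
  sumR (map F (words a 1)) = sumR (map (fun b => F [b]) (seq 0 a)).
Proof. rewrite sum_words_S. apply sumR_map_ext; intros. simpl. lra. Qed.

Definition word_prod (p : nat -> R) (w : list nat) : R := fold_right (fun b r => p b * r) 1 w.

Lemma word_prod_app p w1 w2 : word_prod p (w1 ++ w2) = word_prod p w1 * word_prod p w2.
Proof. induction w1 as [|b w1 IH]; simpl; [lra | rewrite IH; lra]. Qed.

Lemma word_prod_nonneg p w : (forall b, 0 <= p b) -> 0 <= word_prod p w.
Proof. intros H; induction w as [|b w IH]; simpl; [lra|]. specialize (H b). nra. Qed.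

Lemma word_prod_pos p w : (forall b, In b w -> 0 < p b) -> 0 < word_prod p w.
Proof.
  induction w as [|b w IH]; simpl; intros H; [lra|].
  apply Rmult_lt_0_compat; auto.
Qed.

Lemma word_prod_eq0 p w b : In b w -> p b = 0 -> word_prod p w = 0.
Proof.
  induction w as [|c w IH]; simpl; intros Hb Hp; [contradiction|].
  destruct Hb as [<-|Hb]; [rewrite Hp | rewrite IH]; auto; lra.
Qed.

Lemma exp_sumR_map (g : nat -> R) w : exp (sumR (map g w)) = word_prod (fun b => exp (g b)) w.
Proof. induction w as [|b w IH]; simpl; [apply exp_0 | now rewrite exp_plus, IH]. Qed.

Lemma ln_word_prod p w : (forall b, In b w -> 0 < p b) ->
  ln (word_prod p w) = sumR (map (fun b => ln (p b)) w).
Proof.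
  induction w as [|b w IH]; simpl; intros H; [apply ln_1|].
  rewrite ln_mult, IH; auto. apply word_prod_pos; auto.
Qed.

Lemma sum_words_word_prod a p n :
  sumR (map (word_prod p) (words a n)) = (sumR (map p (seq 0 a))) ^ n.
Proof.
  induction n as [|n IH]; [simpl; lra|].
  rewrite sum_words_S. simpl pow. rewrite <- IH, Rmult_comm, <- sumR_map_scal.
  apply sumR_map_ext; intros b _. rewrite Rmult_comm, <- sumR_map_scal.
  apply sumR_map_ext; intros; simpl; lra.
Qed.

Lemma map_nth_seq (w : list nat) d : map (fun i => nth i w d) (seq 0 (length w)) = w.
Proof. induction w as [|b w IH]; simpl; auto. f_equal. now rewrite <- seq_shift, map_map. Qed.

Lemma prefix_length z n : length (prefix z n) = n.
Proof. unfold prefix. now rewrite length_map, length_seq. Qed.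

Lemma prefix_S y n : prefix y (S n) = y 0%nat :: prefix (shift y) n.
Proof. unfold prefix. simpl. f_equal. now rewrite <- seq_shift, map_map. Qed.

Lemma prefix_firstn x n N : (n <= N)%nat -> prefix x n = firstn n (prefix x N).
Proof.
  intros H. replace N with (n + (N - n))%nat by lia. unfold prefix.
  rewrite seq_app, map_app, firstn_app, length_map, length_seq, Nat.sub_diag, app_nil_r.
  rewrite firstn_all2; auto. now rewrite length_map, length_seq.
Qed.

Lemma firstn_app_length (u v : list nat) : firstn (length u) (u ++ v) = u.
Proof. now rewrite firstn_app, Nat.sub_diag, app_nil_r, firstn_all. Qed.

Lemma sum_words_extend_right a (rho : list nat -> R) :
  (forall w, rho w = sumR (map (fun b => rho (w ++ [b])) (seq 0 a))) ->
  forall m x, sumR (map (fun c => rho (x ++ c)) (words a m)) = rho x.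
Proof.
  intros HR m x. induction m as [|m IH]; [simpl; rewrite app_nil_r; lra|].
  replace (S m) with (m + 1)%nat by lia. rewrite sum_words_add, <- IH.
  apply sumR_map_ext; intros c _. rewrite sum_words_1, (HR (x ++ c)).
  apply sumR_map_ext; intros. now rewrite app_assoc.
Qed.

Lemma sum_words_extend_left a (rho : list nat -> R) :
  (forall w, rho w = sumR (map (fun b => rho (b :: w)) (seq 0 a))) ->
  forall n y, sumR (map (fun x => rho (x ++ y)) (words a n)) = rho y.
Proof.
  intros HL n y. induction n as [|n IH]; [simpl; lra|].
  rewrite sum_words_S, sumR_map_swap, <- IH.
  apply sumR_map_ext; intros w _. now rewrite (HL (w ++ y)).
Qed.

(* Note [sqdiv x 0 = 0], because [/ 0 = 0]. *)
Definition sqdiv (x u : R) : R := x * x / u.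

Lemma sqdiv_nonneg x u : 0 <= u -> 0 <= sqdiv x u.
Proof.
  intros H. unfold sqdiv. destruct (Req_dec u 0) as [->|Hu]; [rewrite Rdiv_0_r; lra|].
  unfold Rdiv. apply Rmult_le_pos; [nra | apply Rlt_le, Rinv_0_lt_compat; lra].
Qed.

Lemma sqdiv_sub_mul x r y p : (p = 0 -> r = 0) -> (p * y = 0 -> x = 0) ->
  sqdiv (x - r * y) (p * y) = sqdiv x (p * y) - 2 * (r / p) * x + (r * r / p) * y.
Proof.
  intros Hr Hx. unfold sqdiv.
  destruct (Req_dec p 0) as [Hp|Hp].
  { assert (r = 0) by auto. assert (x = 0) by (apply Hx; rewrite Hp; ring). subst.
    unfold Rdiv. rewrite Rmult_0_l, Rinv_0. ring. }
  destruct (Req_dec y 0) as [Hy|Hy].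
  { rewrite Hx by (rewrite Hy; ring). rewrite Hy. unfold Rdiv. ring. }
  field; auto.
Qed.

Lemma cauchy_schwarz_sqdiv {A} (L : list A) (e w : A -> R) :
  (forall i, In i L -> 0 <= w i) -> (forall i, In i L -> w i = 0 -> e i = 0) ->
  0 < sumR (map w L) ->
  (sumR (map e L)) ^ 2 <= sumR (map w L) * sumR (map (fun i => sqdiv (e i) (w i)) L).
Proof.
  intros Hw He HW. set (W := sumR (map w L)). set (E := sumR (map e L)). set (t := E / W).
  fold W in HW.
  (* expand [0 <= sum (e - t w)^2 / w] with [t = E / W] *)
  assert (Hexp : forall i, In i L ->
            sqdiv (e i - t * w i) (w i) = sqdiv (e i) (w i) - 2 * t * e i + t * t * w i).
  { intros i Hi. unfold sqdiv. destruct (Req_dec (w i) 0) as [Z|Z].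
    - rewrite (He i Hi Z), Z, !Rdiv_0_r. lra.
    - field; auto. }
  assert (H0 : 0 <= sumR (map (fun i => sqdiv (e i - t * w i) (w i)) L)).
  { apply sumR_map_nonneg; intros; apply sqdiv_nonneg; auto. }
  rewrite (sumR_map_ext _ _ _ Hexp), sumR_map_add, sumR_map_sub,
    (sumR_map_scal (t * t) w), (sumR_map_scal (2 * t) e) in H0.
  fold W E in H0. unfold t in H0.
  replace (E ^ 2) with (W * (E / W * E)) by (field; lra).
  apply Rmult_le_compat_l; [lra|].
  assert (E / W * (E / W) * W - 2 * (E / W) * E = - (E / W * E)) by (field; lra). lra.
Qed.

(* A consistent family of weights on words that is dominated by a Bernoulli
   measure coincides with it: [V n = sum_{|w| = n} rho(w)^2 / q(w)] is bounded
   by [C], but Cauchy-Schwarz makes it grow by [(rho b - q b)^2 / q b] every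
   [|b|] steps. *)
Section DominatedConsistent.
Variables (a : nat) (p : nat -> R) (rho : list nat -> R) (C : R).
Hypotheses (p_nonneg : forall b, 0 <= p b) (p_sum : sumR (map p (seq 0 a)) = 1)
  (rho_nonneg : forall w, 0 <= rho w) (rho_nil : rho [] = 1)
  (rho_right : forall w, rho w = sumR (map (fun b => rho (w ++ [b])) (seq 0 a)))
  (rho_left : forall w, rho w = sumR (map (fun b => rho (b :: w)) (seq 0 a)))
  (rho_le : forall w, rho w <= C * word_prod p w).

Let q := word_prod p.
Let V n := sumR (map (fun w => sqdiv (rho w) (q w)) (words a n)).

Lemma q_nonneg w : 0 <= q w.
Proof. now apply word_prod_nonneg. Qed.

Lemma sum_words_q n : sumR (map q (words a n)) = 1.
Proof. unfold q. rewrite sum_words_word_prod, p_sum. apply pow1. Qed.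

Lemma rho_eq0 w : q w = 0 -> rho w = 0.
Proof. intros H. specialize (rho_le w). specialize (rho_nonneg w). fold q in rho_le. nra. Qed.

Lemma V_le n : V n <= C.
Proof.
  apply Rle_trans with (sumR (map (fun w => C * rho w) (words a n))).
  - apply sumR_map_le. intros w _. unfold sqdiv. pose proof (q_nonneg w).
    pose proof (rho_nonneg w). pose proof (rho_le w) as Hw. fold q in Hw.
    destruct (Req_dec (q w) 0) as [Z|Z].
    + rewrite Z, Rdiv_0_r. rewrite rho_eq0 by auto. lra.
    + assert (rho w / q w <= C).
      { apply Rmult_le_reg_r with (q w); [lra|].
        unfold Rdiv. rewrite Rmult_assoc, Rinv_l by auto. lra. }
      replace (rho w * rho w / q w) with (rho w * (rho w / q w)) by (unfold Rdiv; ring). nra.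
  - rewrite sumR_map_scal.
    pose proof (sum_words_extend_left a rho rho_left n []) as Hsum.
    rewrite (sumR_map_ext _ (fun x => rho (x ++ []))) by (intros; now rewrite app_nil_r).
    rewrite Hsum, rho_nil. lra.
Qed.

Lemma V_add_sub n m : V (n + m) - V n =
  sumR (map (fun x => sumR (map (fun c =>
    sqdiv (rho (x ++ c) - rho x * q c) (q x * q c)) (words a m))) (words a n)).
Proof.
  unfold V. rewrite sum_words_add, <- sumR_map_sub. apply sumR_map_ext; intros x _.
  rewrite (sumR_map_ext (fun c => sqdiv (rho (x ++ c) - rho x * q c) (q x * q c))
    (fun c => sqdiv (rho (x ++ c)) (q x * q c) - 2 * (rho x / q x) * rho (x ++ c) + (rho x * rho x / q x) * q c)).
  2:{ intros c _. apply sqdiv_sub_mul.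
      - apply rho_eq0.
      - intros Hq. apply rho_eq0. unfold q. now rewrite word_prod_app. }
  rewrite sumR_map_add, sumR_map_sub, !sumR_map_scal, sum_words_q,
    (sum_words_extend_right a rho rho_right).
  rewrite (sumR_map_ext (fun c => sqdiv (rho (x ++ c)) (q (x ++ c))) (fun c => sqdiv (rho (x ++ c)) (q x * q c)))
    by (intros; unfold q; now rewrite word_prod_app).
  unfold sqdiv, Rdiv. ring.
Qed.

Lemma V_increment n m b : In b (words a m) -> (rho b - q b) ^ 2 <= q b * (V (n + m) - V n).
Proof.
  intros Hb. destruct (Req_dec (q b) 0) as [Z|Z]; [rewrite (rho_eq0 _ Z), Z; nra|].
  set (e := fun x => rho (x ++ b) - rho x * q b).
  set (w := fun x => q x * q b).
  assert (Hw : sumR (map w (words a n)) = q b).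
  { unfold w. rewrite (sumR_map_ext _ (fun x => q b * q x)) by (intros; lra).
    rewrite sumR_map_scal, sum_words_q. lra. }
  assert (He : sumR (map e (words a n)) = rho b - q b).
  { unfold e. rewrite sumR_map_sub, (sum_words_extend_left a rho rho_left).
    rewrite (sumR_map_ext _ (fun x => q b * rho (x ++ []))) by (intros; rewrite app_nil_r; lra).
    rewrite sumR_map_scal, (sum_words_extend_left a rho rho_left), rho_nil. lra. }
  pose proof (q_nonneg b).
  assert (HCS : (rho b - q b) ^ 2 <= q b * sumR (map (fun x => sqdiv (e x) (w x)) (words a n))).
  { rewrite <- He, <- Hw. apply cauchy_schwarz_sqdiv; [| |lra].
    - intros x _. unfold w. pose proof (q_nonneg x). nra.
    - intros x _ Hx. unfold w in Hx. assert (Hqx : q x = 0) by nra. unfold e.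
      rewrite (rho_eq0 x Hqx), rho_eq0; [lra|]. unfold q in *. now rewrite word_prod_app, Hqx, Rmult_0_l. }
  eapply Rle_trans; [exact HCS|]. rewrite V_add_sub. apply Rmult_le_compat_l; [lra|].
  apply sumR_map_le. intros x _.
  apply (sumR_map_ge_term (fun c => sqdiv (rho (x ++ c) - rho x * q c) (q x * q c))); auto.
  intros c _. apply sqdiv_nonneg. pose proof (q_nonneg x). pose proof (q_nonneg c). nra.
Qed.

Lemma dominated_consistent_eq m b : In b (words a m) -> rho b = word_prod p b.
Proof.
  intros Hb. fold q. apply NNPP; intros Hne.
  destruct (Req_dec (q b) 0) as [Z|Z]; [apply Hne; rewrite rho_eq0; auto|].
  assert (Hqb : 0 < q b) by (pose proof (q_nonneg b); lra).
  set (d := (rho b - q b) ^ 2 / q b).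
  assert (Hd : 0 < d).
  { apply Rdiv_lt_0_compat; auto. assert (rho b - q b <> 0) by lra. nra. }
  assert (Hgrow : forall t, INR t * d <= V (t * m)).
  { induction t as [|t IH].
    - simpl. unfold V, sqdiv, q. simpl. rewrite rho_nil. lra.
    - replace (S t * m)%nat with (t * m + m)%nat by lia. rewrite S_INR.
      pose proof (V_increment (t * m) m b Hb).
      assert (d <= V (t * m + m) - V (t * m)).
      { apply Rmult_le_reg_r with (q b); auto.
        unfold d, Rdiv. rewrite Rmult_assoc, Rinv_l by auto. lra. }
      lra. }
  destruct (INR_archimed d C Hd) as [t Ht].
  pose proof (Hgrow t). pose proof (V_le (t * m)). lra.
Qed.

End DominatedConsistent.

Section AlphabetShift.
Variables (a : nat) (good : nat -> bool) (g : nat -> R) (Z : sq -> Prop) (phi : sq -> R).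
Hypotheses (Z_iff : forall z, Z z <-> forall i, (z i < a)%nat /\ good (z i) = true)
  (phi_first : forall z, Z z -> phi z = g (z 0%nat))
  (good_exists : exists b, (b < a)%nat /\ good b = true).

Definition letter_weight (b : nat) : R := if good b then exp (g b) else 0.
Definition weight_total : R := sumR (map letter_weight (seq 0 a)).
Definition letter_prob (b : nat) : R := if (b <? a)%nat then letter_weight b / weight_total else 0.
Definition bernoulli : list nat -> R := word_prod letter_prob.
Definition admissible (w : list nat) : Prop := Forall (fun b => (b < a)%nat /\ good b = true) w.

Lemma letter_weight_nonneg b : 0 <= letter_weight b.
Proof. unfold letter_weight. destruct (good b); [apply Rlt_le, exp_pos | lra]. Qed.

Lemma weight_total_pos : 0 < weight_total.
Proof.
  destruct good_exists as [b [Hb Hgood]].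
  assert (Hle : letter_weight b <= weight_total).
  { apply sumR_map_ge_term; [intros; apply letter_weight_nonneg | apply in_seq; lia]. }
  unfold letter_weight in Hle. rewrite Hgood in Hle. pose proof (exp_pos (g b)). lra.
Qed.

Lemma letter_prob_nonneg b : 0 <= letter_prob b.
Proof.
  unfold letter_prob. destruct (b <? a)%nat; [|lra].
  unfold Rdiv. apply Rmult_le_pos; [apply letter_weight_nonneg|].
  apply Rlt_le, Rinv_0_lt_compat, weight_total_pos.
Qed.

Lemma sum_letter_prob : sumR (map letter_prob (seq 0 a)) = 1.
Proof.
  rewrite (sumR_map_ext _ (fun b => / weight_total * letter_weight b)).
  - rewrite sumR_map_scal. pose proof weight_total_pos. fold weight_total. field. lra.
  - intros b Hb. apply in_seq in Hb. unfold letter_prob.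
    replace (b <? a)%nat with true by (symmetry; apply Nat.ltb_lt; lia). unfold Rdiv. lra.
Qed.

Lemma letter_prob_eq0 b : ~ ((b < a)%nat /\ good b = true) -> letter_prob b = 0.
Proof.
  intros Hb. unfold letter_prob, letter_weight.
  destruct (Nat.ltb_spec b a), (good b) eqn:E; auto; [tauto | unfold Rdiv; ring].
Qed.

Lemma not_admissible_letter w :
  ~ admissible w -> exists b, In b w /\ ~ ((b < a)%nat /\ good b = true).
Proof.
  intros H. apply NNPP; intros Hn. apply H, Forall_forall. intros b Hb.
  apply NNPP; intros Hbad. eauto.
Qed.

Lemma bernoulli_not_admissible w : ~ admissible w -> bernoulli w = 0.
Proof.
  intros H. destruct (not_admissible_letter w H) as [b [Hb Hbad]].
  apply (word_prod_eq0 _ _ b Hb), letter_prob_eq0, Hbad.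
Qed.

Lemma cylinder_nonempty_iff w : (exists z, Z z /\ cyl w z) <-> admissible w.
Proof.
  split.
  - intros [z [Hz Hc]]. unfold cyl, prefix in Hc. unfold admissible. rewrite <- Hc.
    apply Forall_forall. intros x Hx. apply in_map_iff in Hx. destruct Hx as [i [<- _]].
    apply Z_iff; auto.
  - intros Hw. destruct good_exists as [b0 [Hb0 Hgood0]]. exists (fun i => nth i w b0). split.
    + apply Z_iff. intros i. destruct (Nat.lt_ge_cases i (length w)).
      * unfold admissible in Hw. rewrite Forall_forall in Hw. apply Hw, nth_In; auto.
      * rewrite nth_overflow; auto.
    + unfold cyl, prefix. apply map_nth_seq.
Qed.

Lemma shift_invariant z : Z z -> Z (shift z).
Proof. rewrite !Z_iff. intros H i. apply H. Qed.

Lemma birk_cylinder w z : Z z -> cyl w z -> birk phi (length w) z = sumR (map g w).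
Proof.
  intros Hz Hc. unfold cyl, prefix in Hc. rewrite <- Hc at 2. rewrite map_map.
  clear Hc. generalize (length w) as n. intros n. revert z Hz.
  induction n as [|n IH]; intros z Hz; simpl; auto.
  rewrite phi_first, IH by auto using shift_invariant.
  f_equal. rewrite <- seq_shift, map_map. reflexivity.
Qed.

Lemma bernoulli_admissible w :
  admissible w -> bernoulli w = exp (sumR (map g w)) / weight_total ^ length w.
Proof.
  pose proof weight_total_pos. unfold bernoulli, admissible.
  induction w as [|b w IH]; intros Hw; simpl; [rewrite exp_0; field|].
  inversion Hw as [|? ? [Hb Hgood] Hw']; subst. rewrite IH by auto.
  unfold letter_prob, letter_weight. replace (b <? a)%nat with true by (symmetry; apply Nat.ltb_lt; auto).
  rewrite Hgood, exp_plus. field. split; [apply pow_nonzero|]; lra.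
Qed.

Lemma exp_birk_cylinder w z : Z z -> cyl w z ->
  exp (- INR (length w) * ln weight_total + birk phi (length w) z) = bernoulli w.
Proof.
  intros Hz Hc. pose proof weight_total_pos.
  rewrite birk_cylinder, bernoulli_admissible by (auto; apply cylinder_nonempty_iff; eauto).
  rewrite exp_plus, <- Rpower_pow by auto. unfold Rpower.
  replace (- INR (length w) * ln weight_total) with (- (INR (length w) * ln weight_total)) by ring.
  rewrite exp_Ropp. unfold Rdiv. ring.
Qed.

Lemma pressure_alphabet_shift : is_pressure a Z phi (ln weight_total).
Proof.
  apply (Un_cv_eventually_const _ _ 0). intros n _.
  rewrite (sumR_map_ext _ (word_prod letter_weight)).
  - rewrite sum_words_word_prod. fold weight_total.
    rewrite ln_pow by apply weight_total_pos. field. apply not_0_INR; lia.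
  - intros w Hw. apply In_words in Hw. destruct Hw as [Hlen Halph].
    destruct (excluded_middle_informative _) as [Hne|Hne].
    + assert (Hadm : admissible w) by (apply cylinder_nonempty_iff; auto).
      rewrite (lub_of_unique_value _ (sumR (map g w))).
      * rewrite exp_sumR_map. clear -Hadm. induction Hadm as [|b w [_ Hgood]]; auto.
        simpl. unfold letter_weight. now rewrite Hgood, IHHadm.
      * destruct Hne as [z [Hz Hc]]. eauto.
      * intros t [z [Hz [Hc ->]]]. rewrite <- Hlen. apply birk_cylinder; auto.
    + rewrite cylinder_nonempty_iff in Hne.
      destruct (not_admissible_letter w Hne) as [b [Hb Hbad]].
      symmetry. apply (word_prod_eq0 _ _ b Hb). unfold letter_weight.
      rewrite Forall_forall in Halph. destruct (good b) eqn:E; auto. exfalso. auto.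
Qed.

Lemma inv_meas_bernoulli : inv_meas a Z bernoulli.
Proof.
  split; [|split; [|split; [|split]]].
  - intros w. apply word_prod_nonneg, letter_prob_nonneg.
  - reflexivity.
  - intros w. rewrite (sumR_map_ext _ (fun b => bernoulli w * letter_prob b)).
    + rewrite sumR_map_scal, sum_letter_prob. lra.
    + intros b _. unfold bernoulli. rewrite word_prod_app. simpl. ring.
  - intros w. rewrite (sumR_map_ext _ (fun b => bernoulli w * letter_prob b)).
    + rewrite sumR_map_scal, sum_letter_prob. lra.
    + intros b _. unfold bernoulli. simpl. ring.
  - intros w Hw. apply bernoulli_not_admissible. now rewrite <- cylinder_nonempty_iff.
Qed.

Lemma gibbs_bernoulli : gibbs a Z phi bernoulli.
Proof.
  split; [apply inv_meas_bernoulli|]. exists (ln weight_total), 2.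
  split; [apply pressure_alphabet_shift|]. split; [lra|].
  intros z n Hz _.
  assert (Hc : cyl (prefix z n) z) by (unfold cyl; now rewrite prefix_length).
  pose proof (exp_birk_cylinder _ _ Hz Hc) as E. rewrite prefix_length in E. rewrite E.
  assert (0 < bernoulli (prefix z n)) by (rewrite <- E; apply exp_pos).
  unfold Rdiv. rewrite Rinv_r by lra. lra.
Qed.

Lemma gibbs_eq_bernoulli mu : gibbs a Z phi mu -> forall w, mu w = bernoulli w.
Proof.
  intros [Hmu [P [C0 [HP [HC0 Hbound]]]]].
  assert (EP : P = ln weight_total) by (eapply UL_sequence; eauto; apply pressure_alphabet_shift).
  subst P. destruct Hmu as [mu_nonneg [mu_nil [mu_right [mu_left mu_supp]]]].
  assert (Hdom : forall w, mu w <= (C0 + 1) * bernoulli w).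
  { intros w. pose proof (word_prod_nonneg _ w letter_prob_nonneg).
    destruct (classic (exists z, Z z /\ cyl w z)) as [[z [Hz Hc]]|Hn];
      [|rewrite mu_supp by auto; fold bernoulli in *; nra].
    destruct w as [|b w']; [rewrite mu_nil; unfold bernoulli; simpl; lra|].
    specialize (Hbound z (length (b :: w')) Hz ltac:(simpl; lia)) as [_ Hlt].
    unfold cyl in Hc. rewrite Hc, exp_birk_cylinder in Hlt by auto.
    assert (Hpos : 0 < bernoulli (b :: w')) by (rewrite <- (exp_birk_cylinder _ z); auto; apply exp_pos).
    apply Rmult_lt_compat_r with (r := bernoulli (b :: w')) in Hlt; auto.
    unfold Rdiv in Hlt. rewrite Rmult_assoc, Rinv_l in Hlt by lra. lra. }
  intros w. destruct (classic (admissible w)) as [Hadm|Hadm].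
  - apply (dominated_consistent_eq a letter_prob mu (C0 + 1)) with (m := length w);
      auto using letter_prob_nonneg, sum_letter_prob.
    apply In_words. split; auto. eapply Forall_impl; [|apply Hadm]. simpl; tauto.
  - rewrite bernoulli_not_admissible, mu_supp by (rewrite ?cylinder_nonempty_iff; auto). reflexivity.
Qed.

End AlphabetShift.

Section OneBlockFactor.
Variables (k l : nat) (Y : sq -> Prop) (pi : sq -> sq) (f : sq -> R).
Hypotheses (k_pos : (1 <= k)%nat) (Y_subshift : subshift l Y)
  (pi_factor : one_block_factor k l Y pi)
  (f_first : forall x x', in_alph k x -> in_alph k x' -> x 0%nat = x' 0%nat -> f x = f x').

Definition pi_letter (b : nat) : nat := pi (fun _ => b) 0%nat.
Definition f_letter (b : nat) : R := f (fun _ => b).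
Definition fibre_weight (wt : nat -> R) (s : nat) : R :=
  sumR (map (fun b => if (pi_letter b =? s)%nat then wt b else 0) (seq 0 k)).
Definition maps_onto (v w : list nat) : bool :=
  if list_eq_dec Nat.eq_dec (map pi_letter w) v then true else false.

Lemma pi_letterwise x i : in_alph k x -> pi x i = pi_letter (x i).
Proof.
  destruct pi_factor as [_ [_ [_ [pi_shift pi_block]]]].
  revert x; induction i as [|i IH]; intros x Hx.
  - apply pi_block; auto. intros j; apply Hx.
  - specialize (pi_shift x i Hx). unfold shift at 2 in pi_shift. rewrite <- pi_shift.
    apply IH. intros j; apply Hx.
Qed.

Lemma pi_letter_lt b : (b < k)%nat -> (pi_letter b < l)%nat.
Proof.
  intros Hb. destruct pi_factor as [pi_into _]. destruct Y_subshift as [Y_alph _].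
  exact (Y_alph _ (pi_into (fun _ => b) (fun _ => Hb)) 0%nat).
Qed.

Lemma in_alph_iff z : in_alph k z <-> forall i, (z i < k)%nat /\ (fun _ => true) (z i) = true.
Proof. split; intros H i; [split; auto | apply H]. Qed.

Lemma f_letter_first x : in_alph k x -> f x = f_letter (x 0%nat).
Proof. intros Hx. apply f_first; auto. intros i; apply Hx. Qed.

Lemma birk_f_cylinder w z : in_alph k z -> cyl w z -> birk f (length w) z = sumR (map f_letter w).
Proof. apply (birk_cylinder k (fun _ => true)); [apply in_alph_iff | apply f_letter_first]. Qed.

Definition pad (w : list nat) : sq := fun i => nth i w 0%nat.

Lemma pad_in_alph w : Forall (fun b => (b < k)%nat) w -> in_alph k (pad w).
Proof.
  intros Hw i. unfold pad. destruct (Nat.lt_ge_cases i (length w)).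
  - rewrite Forall_forall in Hw. apply Hw, nth_In; auto.
  - rewrite nth_overflow; [lia | auto].
Qed.

Lemma pad_cyl w : cyl w (pad w).
Proof. apply map_nth_seq. Qed.

Lemma prefix_pi x n : in_alph k x -> prefix (pi x) n = map pi_letter (prefix x n).
Proof. intros Hx. unfold prefix. rewrite map_map. apply map_ext. intros; now apply pi_letterwise. Qed.

Lemma cyl_maps_into_iff w v : Forall (fun b => (b < k)%nat) w -> (length v <= length w)%nat ->
  cyl_maps_into k pi w v <-> map pi_letter (firstn (length v) w) = v.
Proof.
  intros Hw Hlen. split.
  - intros H. specialize (H _ (pad_in_alph w Hw) (pad_cyl w)).
    unfold cyl in H. rewrite prefix_pi in H by (apply pad_in_alph; auto).
    rewrite <- H at 2. f_equal. rewrite (prefix_firstn _ _ (length w)) by auto. now rewrite pad_cyl.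
  - intros H x Hx Hc. unfold cyl in *. rewrite prefix_pi, <- H by auto. f_equal.
    rewrite length_map, length_firstn, Nat.min_l by auto.
    rewrite (prefix_firstn _ _ (length w)) by auto. now rewrite Hc.
Qed.

Lemma maps_onto_spec v w : maps_onto v w = true <-> map pi_letter w = v.
Proof. unfold maps_onto. destruct (list_eq_dec _ _ _); split; congruence. Qed.

Lemma sum_fibre_word_prod (wt : nat -> R) v :
  sumR (map (fun w => if maps_onto v w then word_prod wt w else 0) (words k (length v))) =
  word_prod (fibre_weight wt) v.
Proof.
  induction v as [|s v IH]; [simpl; lra|].
  simpl length. rewrite sum_words_S. simpl word_prod. unfold fibre_weight at 1.
  rewrite <- IH, Rmult_comm, <- sumR_map_scal.
  apply sumR_map_ext. intros b _. rewrite Rmult_comm, <- sumR_map_scal.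
  apply sumR_map_ext. intros w _. unfold maps_onto. simpl map.
  destruct (Nat.eqb_spec (pi_letter b) s) as [<-|Hb];
    destruct (list_eq_dec Nat.eq_dec (map pi_letter w) v) as [<-|Hw];
    destruct (list_eq_dec _ _ _) as [E|E]; simpl; try lra;
    exfalso; [apply E; reflexivity | inversion E; contradiction | inversion E; contradiction..].
Qed.

Definition fibre_exp : nat -> R := fibre_weight (fun b => exp (f_letter b)).

Lemma In_fibre_words n y w :
  In w (filter (maps_onto (prefix y n)) (words k n)) <->
  length w = n /\ Forall (fun b => (b < k)%nat) w /\ cyl_maps_into k pi w (prefix y n).
Proof.
  rewrite filter_In, In_words, maps_onto_spec. split.
  - intros [[Hl Hw] Hm]. split; [auto|]. split; [auto|].
    apply cyl_maps_into_iff; [auto | rewrite prefix_length; lia|].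
    rewrite prefix_length. subst n. now rewrite firstn_all.
  - intros [Hl [Hw Hc]].
    apply cyl_maps_into_iff in Hc; [|auto | rewrite prefix_length; lia].
    rewrite prefix_length in Hc. subst n. now rewrite firstn_all in Hc.
Qed.

Lemma Esums_pad n y :
  Esums k pi f n y (sumR (map (fun w => exp (birk f n (pad w)))
                          (filter (maps_onto (prefix y n)) (words k n)))).
Proof.
  exists pad, (filter (maps_onto (prefix y n)) (words k n)).
  split; [|split; [|split]]; auto.
  - apply NoDup_filter, NoDup_words.
  - intros w. apply In_fibre_words.
  - intros w Hw. apply In_fibre_words in Hw as [_ [Hw _]]. split; [now apply pad_in_alph | apply pad_cyl].
Qed.

Lemma Esums_value n y s : Esums k pi f n y s -> s = word_prod fibre_exp (prefix y n).
Proof.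
  intros [c [L [HN [HL [Hc ->]]]]].
  assert (HP : Permutation L (filter (maps_onto (prefix y n)) (words k n))).
  { apply NoDup_Permutation; [auto | apply NoDup_filter, NoDup_words|].
    intros w. now rewrite HL, In_fibre_words. }
  rewrite (sumR_map_ext _ (word_prod (fun b => exp (f_letter b)))).
  - rewrite (sumR_perm _ _ (Permutation_map _ HP)), sumR_map_filter.
    unfold fibre_exp. rewrite <- sum_fibre_word_prod, prefix_length. reflexivity.
  - intros w Hw. destruct (Hc w Hw) as [Hx Hcyl]. apply HL in Hw as [Hl _].
    now rewrite <- Hl, birk_f_cylinder, exp_sumR_map.
Qed.

Lemma gbar_eq_word_prod n y : gbar k pi f n y = word_prod fibre_exp (prefix y n).
Proof. apply lub_of_unique_value; [eexists; apply Esums_pad | apply Esums_value]. Qed.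

Lemma gbar_cocycle n y : (2 <= n)%nat ->
  gbar k pi f n y = gbar k pi f 1 y * gbar k pi f (n - 1) (shift y).
Proof.
  intros Hn. rewrite !gbar_eq_word_prod. destruct n as [|n]; [lia|].
  rewrite prefix_S. simpl. rewrite Nat.sub_0_r. lra.
Qed.

Definition ln_fibre (s : nat) : R := ln (fibre_exp s).

Lemma fibre_exp_pos b : (b < k)%nat -> 0 < fibre_exp (pi_letter b).
Proof.
  intros Hb. pose proof (exp_pos (f_letter b)).
  assert (exp (f_letter b) <= fibre_exp (pi_letter b)); [|lra].
  replace (exp (f_letter b))
    with ((fun c => if (pi_letter c =? pi_letter b)%nat then exp (f_letter c) else 0) b)
    by (simpl; now rewrite Nat.eqb_refl).
  unfold fibre_exp, fibre_weight.
  apply (sumR_map_ge_term (fun c => if (pi_letter c =? pi_letter b)%nat then exp (f_letter c) else 0));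
    [|apply in_seq; lia].
  intros c _. destruct (_ =? _)%nat; [apply Rlt_le, exp_pos | lra].
Qed.

Lemma fibre_exp_pos_on_Y z i : Y z -> 0 < fibre_exp (z i).
Proof.
  intros Hz. destruct pi_factor as [_ [pi_onto _]]. destruct (pi_onto z Hz) as [x [Hx <-]].
  rewrite pi_letterwise by auto. apply fibre_exp_pos, Hx.
Qed.

Lemma ln_gbar_cylinder n z w : (n <= length w)%nat -> Y z -> cyl w z ->
  ln (gbar k pi f n z) = sumR (map ln_fibre (firstn n w)).
Proof.
  intros Hn Hz Hc. rewrite gbar_eq_word_prod, ln_word_prod.
  - rewrite (prefix_firstn _ _ (length w)) by auto. now rewrite Hc.
  - intros b Hb. unfold prefix in Hb. apply in_map_iff in Hb as [i [<- _]].
    now apply fibre_exp_pos_on_Y.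
Qed.

Section Integral.
Variable m : list nat -> R.
Hypothesis m_inv : inv_meas l Y m.

Definition mean_ln_fibre : R := sumR (map (fun b => m [b] * ln_fibre b) (seq 0 l)).

Lemma sum_words_mass_birk n :
  sumR (map (fun x => m x * sumR (map ln_fibre x)) (words l n)) = INR n * mean_ln_fibre.
Proof.
  destruct m_inv as [_ [_ [m_right [m_left _]]]].
  induction n as [|n IH]; [simpl; lra|].
  replace (S n) with (n + 1)%nat by lia. rewrite sum_words_add, plus_INR, Rmult_plus_distr_r, <- IH.
  simpl (INR 1). rewrite Rmult_1_l.
  rewrite (sumR_map_ext _ (fun x => sumR (map ln_fibre x) * m x
      + sumR (map (fun b => ln_fibre b * m (x ++ [b])) (seq 0 l)))).
  - rewrite sumR_map_add. f_equal; [apply sumR_map_ext; intros; lra|].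
    rewrite sumR_map_swap. apply sumR_map_ext. intros b _.
    rewrite sumR_map_scal, (sum_words_extend_left l m m_left). lra.
  - intros x _. rewrite sum_words_1, (m_right x) at 1.
    rewrite <- sumR_map_scal, <- sumR_map_add. apply sumR_map_ext. intros b _.
    rewrite map_app, sumR_app. simpl. lra.
Qed.

Lemma riemann_ln_gbar n N : (n <= N)%nat ->
  riemann l Y m (fun y => ln (gbar k pi f n y)) N = INR n * mean_ln_fibre.
Proof.
  intros HnN. destruct m_inv as [_ [_ [m_right [_ m_supp]]]]. unfold riemann.
  rewrite (sumR_map_ext _ (fun w => m w * sumR (map ln_fibre (firstn n w)))).
  - rewrite <- sum_words_mass_birk. replace N with (n + (N - n))%nat by lia.
    rewrite sum_words_add. apply sumR_map_ext. intros x Hx. apply In_words in Hx as [Hxl _].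
    rewrite (sumR_map_ext _ (fun y => sumR (map ln_fibre x) * m (x ++ y))).
    + rewrite sumR_map_scal, (sum_words_extend_right l m m_right). lra.
    + intros y _. rewrite <- Hxl, firstn_app_length. lra.
  - intros w Hw. apply In_words in Hw as [Hl _].
    destruct (classic (exists z, Y z /\ cyl w z)) as [Hne|Hne]; [|rewrite m_supp by auto; lra].
    destruct (epsilon_spec (inhabits (fun _ => 0%nat)) _ Hne) as [Hz Hc].
    rewrite (ln_gbar_cylinder n _ w); auto. lia.
Qed.

Lemma is_integral_ln_gbar n :
  is_integral l Y m (fun y => ln (gbar k pi f n y)) (INR n * mean_ln_fibre).
Proof. apply (Un_cv_eventually_const _ _ n), riemann_ln_gbar. Qed.

End Integral.

Lemma integrals_ln_gbar m : inv_meas l Y m ->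
  exists J, forall n, is_integral l Y m (fun y => ln (gbar k pi f n y)) (INR n * J).
Proof. intros Hm. exists (mean_ln_fibre m). now apply is_integral_ln_gbar. Qed.

Definition in_image (s : nat) : bool := existsb (fun b => (pi_letter b =? s)%nat) (seq 0 k).
Definition preimage_letter (s : nat) : nat :=
  hd 0%nat (filter (fun b => (pi_letter b =? s)%nat) (seq 0 k)).

Lemma preimage_letter_spec s :
  in_image s = true -> (preimage_letter s < k)%nat /\ pi_letter (preimage_letter s) = s.
Proof.
  intros Hs. unfold in_image in Hs. apply existsb_exists in Hs as [b [Hb Hbs]].
  assert (Hin : In (preimage_letter s) (filter (fun b => (pi_letter b =? s)%nat) (seq 0 k))).
  { unfold preimage_letter. destruct (filter _ _) as [|c L] eqn:E; [|now left].
    assert (In b (filter (fun b => (pi_letter b =? s)%nat) (seq 0 k))) by now apply filter_In.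
    rewrite E in *. contradiction. }
  apply filter_In in Hin as [Hlt Heq]. apply in_seq in Hlt. apply Nat.eqb_eq in Heq. split; [lia | auto].
Qed.

Lemma in_image_pi_letter b : (b < k)%nat -> in_image (pi_letter b) = true.
Proof. intros Hb. apply existsb_exists. exists b. split; [apply in_seq; lia | apply Nat.eqb_refl]. Qed.

Lemma Y_iff z : Y z <-> forall i, (z i < l)%nat /\ in_image (z i) = true.
Proof.
  destruct pi_factor as [pi_into [pi_onto _]]. split.
  - intros Hz i. split; [now apply Y_subshift|].
    destruct (pi_onto z Hz) as [x [Hx <-]]. rewrite pi_letterwise by auto.
    apply in_image_pi_letter, Hx.
  - intros Hz. set (x := fun i => preimage_letter (z i)).
    assert (Hx : in_alph k x) by (intros i; apply preimage_letter_spec, Hz).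
    replace z with (pi x); [now apply pi_into|].
    apply functional_extensionality. intros i. rewrite pi_letterwise by auto.
    apply preimage_letter_spec, Hz.
Qed.

Lemma ln_gbar_1 z : ln (gbar k pi f 1 z) = ln_fibre (z 0%nat).
Proof. rewrite gbar_eq_word_prod. unfold prefix. simpl. now rewrite Rmult_1_r. Qed.

Lemma fibre_exp_not_image s : in_image s = false -> fibre_exp s = 0.
Proof.
  intros Hs. apply sumR_map_zero. intros b Hb. destruct (Nat.eqb_spec (pi_letter b) s) as [<-|]; auto.
  apply in_seq in Hb. rewrite in_image_pi_letter in Hs by lia. discriminate.
Qed.

Lemma letter_weight_image s : letter_weight in_image ln_fibre s = fibre_exp s.
Proof.
  unfold letter_weight. destruct (in_image s) eqn:E.
  - apply exp_ln. destruct (preimage_letter_spec s E) as [Hlt <-]. now apply fibre_exp_pos.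
  - symmetry. now apply fibre_exp_not_image.
Qed.

Lemma weight_total_image : weight_total l in_image ln_fibre = weight_total k (fun _ => true) f_letter.
Proof.
  unfold weight_total. rewrite (sumR_map_ext _ fibre_exp) by (intros; apply letter_weight_image).
  unfold fibre_exp, fibre_weight. rewrite sumR_map_swap. apply sumR_map_ext. intros b Hb.
  apply in_seq in Hb. rewrite sumR_map_indicator; [reflexivity | apply seq_NoDup|].
  apply in_seq. pose proof (pi_letter_lt b). lia.
Qed.

Lemma fibre_letter_prob s :
  fibre_weight (letter_prob k (fun _ => true) f_letter) s = letter_prob l in_image ln_fibre s.
Proof.
  set (Z := weight_total k (fun _ => true) f_letter). unfold fibre_weight at 1.
  rewrite (sumR_map_ext _ (fun b => / Z * (if (pi_letter b =? s)%nat then exp (f_letter b) else 0))).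
  - rewrite sumR_map_scal. fold (fibre_weight (fun b => exp (f_letter b)) s). fold (fibre_exp s).
    unfold letter_prob. rewrite letter_weight_image, weight_total_image. fold Z.
    destruct (Nat.ltb_spec s l); [unfold Rdiv; lra|].
    rewrite fibre_exp_not_image; [lra|].
    destruct (in_image s) eqn:E; auto. destruct (preimage_letter_spec s E) as [Hlt Hs].
    pose proof (pi_letter_lt _ Hlt). lia.
  - intros b Hb. apply in_seq in Hb. unfold letter_prob, letter_weight.
    replace (b <? k)%nat with true by (symmetry; apply Nat.ltb_lt; lia).
    destruct (_ =? _)%nat; unfold Z, Rdiv; lra.
Qed.

Lemma exists_letter : exists b, (b < k)%nat /\ (fun _ => true) b = true.
Proof. exists 0%nat. split; [lia | reflexivity]. Qed.

Lemma exists_image_letter : exists s, (s < l)%nat /\ in_image s = true.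
Proof. exists (pi_letter 0%nat). split; [apply pi_letter_lt | apply in_image_pi_letter]; lia. Qed.

Let mu_X := bernoulli k (fun _ => true) f_letter.
Let nu_Y := bernoulli l in_image ln_fibre.

Lemma gibbs_full_shift : gibbs k (in_alph k) f mu_X.
Proof. exact (gibbs_bernoulli _ _ _ _ _ in_alph_iff f_letter_first exists_letter). Qed.

Lemma gibbs_full_shift_unique mu : gibbs k (in_alph k) f mu -> forall w, mu w = mu_X w.
Proof. exact (gibbs_eq_bernoulli _ _ _ _ _ in_alph_iff f_letter_first exists_letter mu). Qed.

Lemma gibbs_factor : gibbs l Y (fun y => ln (gbar k pi f 1 y)) nu_Y.
Proof.
  exact (gibbs_bernoulli _ _ _ _ _ Y_iff (fun z _ => ln_gbar_1 z) exists_image_letter).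
Qed.

Lemma gibbs_factor_unique nu :
  gibbs l Y (fun y => ln (gbar k pi f 1 y)) nu -> forall w, nu w = nu_Y w.
Proof.
  exact (gibbs_eq_bernoulli _ _ _ _ _ Y_iff (fun z _ => ln_gbar_1 z) exists_image_letter nu).
Qed.

Lemma pushforward_bernoulli : pushforward k pi mu_X nu_Y.
Proof.
  intros v. exists (length v). intros N HN.
  rewrite (sumR_map_ext _ (fun w => if maps_onto v (firstn (length v) w) then mu_X w else 0)).
  - replace N with (length v + (N - length v))%nat by lia. rewrite sum_words_add.
    unfold nu_Y, bernoulli.
    replace (letter_prob l in_image ln_fibre) with (fibre_weight (letter_prob k (fun _ => true) f_letter))
      by (apply functional_extensionality; apply fibre_letter_prob).
    rewrite <- sum_fibre_word_prod. apply sumR_map_ext. intros x Hx. apply In_words in Hx as [Hxl _].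
    rewrite (sumR_map_ext _ (fun y => (if maps_onto v x then mu_X x else 0) * mu_X y)).
    + unfold mu_X, bernoulli. rewrite sumR_map_scal, sum_words_word_prod, sum_letter_prob, pow1
        by apply exists_letter. lra.
    + intros y _. rewrite <- Hxl, firstn_app_length.
      destruct (maps_onto v x); [unfold mu_X, bernoulli; apply word_prod_app | lra].
  - intros w Hw. apply In_words in Hw as [Hwl Hwk].
    pose proof (cyl_maps_into_iff w v Hwk ltac:(lia)) as Hiff.
    unfold maps_onto. destruct (excluded_middle_informative _), (list_eq_dec _ _ _); tauto.
Qed.

Lemma pushforward_gibbs mu : gibbs k (in_alph k) f mu -> pushforward k pi mu nu_Y.
Proof.
  intros Hmu. replace mu with mu_X; [apply pushforward_bernoulli|].
  apply functional_extensionality. intros w. symmetry. now apply gibbs_full_shift_unique.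
Qed.

End OneBlockFactor.

Theorem proposition6p1 (k l : nat) (Y : sq -> Prop) (pi : sq -> sq) (f : sq -> R) :
  (1 <= k)%nat ->
  subshift l Y ->
  one_block_factor k l Y pi ->
  (forall x x', in_alph k x -> in_alph k x' -> x 0%nat = x' 0%nat -> f x = f x') ->
  (forall n y, (2 <= n)%nat -> Y y ->
     gbar k pi f n y = gbar k pi f 1 y * gbar k pi f (n - 1) (shift y)) /\
  (forall m, inv_meas l Y m ->
     exists (I : nat -> R) (J : R),
       (forall n, (1 <= n)%nat -> is_integral l Y m (fun y => ln (gbar k pi f n y)) (I n)) /\
       is_integral l Y m (fun y => ln (gbar k pi f 1 y)) J /\
       Un_cv (fun n => I (S n) / INR (S n)) J) /\
  ((exists mu, gibbs k (in_alph k) f mu) /\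
   (forall mu mu', gibbs k (in_alph k) f mu -> gibbs k (in_alph k) f mu' ->
      forall w, mu w = mu' w) /\
   (forall mu, gibbs k (in_alph k) f mu ->
      exists nu, pushforward k pi mu nu /\
        gibbs l Y (fun y => ln (gbar k pi f 1 y)) nu /\
        (forall nu', gibbs l Y (fun y => ln (gbar k pi f 1 y)) nu' ->
           forall w, nu' w = nu w))).
Proof.
  intros Hk HY Hpi Hf. split; [|split; [|split; [|split]]].
  - intros n y Hn _. now apply gbar_cocycle with l Y.
  - intros m Hm. destruct (integrals_ln_gbar k l Y pi f Hk Hpi Hf m Hm) as [J HJ].
    exists (fun n => INR n * J), J. split; [|split].
    + intros n _. apply HJ.
    + replace J with (INR 1 * J) by (simpl; ring). apply HJ.
    + apply (Un_cv_eventually_const _ _ 0). intros n _. field. apply not_0_INR. lia.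
  - eexists. now apply gibbs_full_shift.
  - intros mu mu' Hmu Hmu' w.
    now rewrite (gibbs_full_shift_unique k f Hk Hf mu Hmu), (gibbs_full_shift_unique k f Hk Hf mu' Hmu').
  - intros mu Hmu. exists (bernoulli l (in_image k pi) (ln_fibre k pi f)).
    split; [|split].
    + now apply pushforward_gibbs with Y.
    + now apply gibbs_factor.
    + intros nu' Hnu'. now apply gibbs_factor_unique with Y.
Qed.
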